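(* For every integer $k\ge 1$, let $\mathcal{L}^2(k)=\gcd\{\sum_{i=1}^k L_{n+i}^2 : n \ge 0\}$. Then $$\mathcal{L}^2(k) = \begin{cases} 5F_k, & \text{if $k$ is even},\\ 2, & \text{if $k \equiv 3 \pmod{6}$},\\ 1, & \text{if $k \equiv 1,5 \pmod{6}$}.\end{cases}$$
   Context: $(L_n)$ is the Lucas sequence: $L_0=2$, $L_1=1$, $L_n=L_{n-1}+L_{n-2}$; $(F_n)$ is the Fibonacci sequence: $F_0=0$, $F_1=1$, $F_n=F_{n-1}+F_{n-2}$. *)

From mathcomp Require Import all_boot.
Set Implicit Arguments. Unset Strict Implicit. Unset Printing Implicit Defensive.

Fixpoint fib (n : nat) : nat :=
  match n with
  | 0 => 0
  | 1 => 1
  | (m.+1 as p).+1 => fib p + fib m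
  end.

Fixpoint lucas (n : nat) : nat :=
  match n with
  | 0 => 2
  | 1 => 1
  | (m.+1 as p).+1 => lucas p + lucas m
  end.

Definition lucas_sq_sum (k n : nat) : nat := \sum_(1 <= i < k.+1) (lucas (n + i)) ^ 2.

Definition is_gcd_of_seq (f : nat -> nat) (g : nat) : Prop :=
  (forall n, g %| f n) /\ (forall d, (forall n, d %| f n) -> d %| g).

From mathcomp Require Import all_boot.
From mathcomp Require Import zify.

(* With [P_m = L_m L_(m+1)] the sum telescopes to [P_(n+k) - P_n], and Cassini's
   identity for Lucas numbers gives [P_(m+2) + P_m = 3 P_(m+1) +- 5], the sign
   alternating with m.  For even k the errors cancel and the sums satisfy
   [x_(n+2) + x_n = 3 x_(n+1)]; in fact they equal [5 F_k F_(2n+k+1)], and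
   [F_(k+1)], [F_(k+3)] are coprime.  For odd k the relation holds up to +-10,
   so a common divisor divides 10, and it is prime to 5 since the first sum is
   [5 F_k F_(k+1) - 4].  Finally L_m is odd iff 3 does not divide m, so P_m is
   odd iff m = 1 (mod 3), and all the sums are even exactly when 3 divides k. *)

Lemma fibSS n : fib n.+2 = fib n.+1 + fib n. Proof. by []. Qed.
Lemma lucasSS n : lucas n.+2 = lucas n.+1 + lucas n. Proof. by []. Qed.

Lemma fib_cassini n :
  fib n.+1 ^ 2 + odd n = fib n.+1 * fib n + fib n ^ 2 + ~~ odd n.
Proof. by elim: n => [|n IHn] //; rewrite fibSS oddS negbK; lia. Qed.

Lemma lucas_cassini n :
  lucas n.+1 ^ 2 + 5 * ~~ odd n = lucas n.+1 * lucas n + lucas n ^ 2 + 5 * odd n.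
Proof. by elim: n => [|n IHn] //; rewrite lucasSS oddS negbK; lia. Qed.

Lemma lucas_fib n : lucas n + fib n = 2 * fib n.+1.
Proof.
suff: lucas n + fib n = 2 * fib n.+1 /\ lucas n.+1 + fib n.+1 = 2 * fib n.+2 by case.
by elim: n => [|n [IH1 IH2]] //; split=> //; rewrite lucasSS !fibSS in IH2 *; lia.
Qed.

Definition lucas_prod m := lucas m * lucas m.+1.

Lemma lucas_prod_fib m :
  lucas_prod m + 2 * odd m = 5 * (fib m * fib m.+1) + 2 * ~~ odd m.
Proof.
have := lucas_fib m; have := lucas_fib m.+1; have := fib_cassini m.
rewrite /lucas_prod fibSS; nia.
Qed.

Lemma lucas_prod_rec n :
  lucas_prod n.+2 + lucas_prod n + 5 * odd n = 3 * lucas_prod n.+1 + 5 * ~~ odd n.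
Proof. by have := lucas_cassini n; rewrite /lucas_prod !lucasSS; lia. Qed.

(* [L_(m+1)^2 = L_(m+1) (L_(m+2) - L_m)], so the sum telescopes. *)
Lemma lucas_sq_sum_telescope k n :
  lucas_sq_sum k n + lucas_prod n = lucas_prod (n + k).
Proof.
elim: k => [|k IHk]; first by rewrite /lucas_sq_sum big_geq ?addn0.
rewrite /lucas_sq_sum big_nat_recr //= -/(lucas_sq_sum k n) addnS.
by move: IHk; rewrite /lucas_prod (lucasSS (n + k)); lia.
Qed.

Lemma lucas_sq_sum_rec k n :
  lucas_sq_sum k n.+2 + lucas_sq_sum k n + 5 * ~~ odd n + 5 * odd (n + k) =
  3 * lucas_sq_sum k n.+1 + 5 * odd n + 5 * ~~ odd (n + k).
Proof.
have := lucas_prod_rec n; have := lucas_prod_rec (n + k).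
have := lucas_sq_sum_telescope k n; have := lucas_sq_sum_telescope k n.+1.
have := lucas_sq_sum_telescope k n.+2; rewrite !addSn; lia.
Qed.

Lemma lucas_sq_sum_even k n :
  ~~ odd k -> lucas_sq_sum k n = 5 * fib k * fib (k + n.*2).+1.
Proof.
move=> even_k; have prod_k := lucas_prod_fib k; have prod_k1 := lucas_prod_fib k.+1.
have cas := fib_cassini k; rewrite oddS (negbTE even_k) in prod_k prod_k1 cas.
suff: lucas_sq_sum k n = 5 * fib k * fib (k + n.*2).+1 /\
      lucas_sq_sum k n.+1 = 5 * fib k * fib (k + n.+1.*2).+1 by case.
elim: n => [|n [IH0 IH1]].
  have := lucas_sq_sum_telescope k 0; have := lucas_sq_sum_telescope k 1.
  have -> : (k + 1.*2).+1 = k.+3 by rewrite addnC.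
  rewrite (_ : lucas_prod 0 = 2) // (_ : lucas_prod 1 = 3) // add0n add1n addn0.
  rewrite !fibSS in prod_k1 *; lia.
split=> //; have := lucas_sq_sum_rec k n; rewrite oddD (negbTE even_k) addbF.
have -> : (k + n.+2.*2).+1 = (k + n.*2).+1.+4 by rewrite !doubleS !addnS.
rewrite IH0 IH1 doubleS !addnS !fibSS; lia.
Qed.

Lemma coprime_fibS n : coprime (fib n) (fib n.+1).
Proof. by elim: n => [|n IHn] //; rewrite /coprime fibSS gcdnDl gcdnC. Qed.

Lemma lucas_sq_sum_gcd_even k :
  ~~ odd k -> is_gcd_of_seq (lucas_sq_sum k) (5 * fib k).
Proof.
move=> even_k; split=> [n|d dvd_d]; first by rewrite lucas_sq_sum_even // dvdn_mulr.
have := dvd_d 0; have := dvd_d 1; rewrite !lucas_sq_sum_even // !addn0 => d1 d0.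
have : d %| gcdn (5 * fib k * fib k.+1) (5 * fib k * fib (k + 1.*2).+1).
  by rewrite dvdn_gcd d0 d1.
have -> : (k + 1.*2).+1 = k.+3 by rewrite addnC.
rewrite -muln_gcdr fibSS gcdnDr.
by rewrite (eqP (coprime_fibS _)) muln1.
Qed.

Lemma odd_lucas n : odd (lucas n) = (n %% 3 != 0).
Proof.
suff: odd (lucas n) = (n %% 3 != 0) /\ odd (lucas n.+1) = (n.+1 %% 3 != 0) by case.
elim: n => [|n [IH0 IH1]] //; split=> //.
by rewrite lucasSS oddD IH0 IH1; lia.
Qed.

Lemma odd_lucas_prod m : odd (lucas_prod m) = (m %% 3 == 1).
Proof. by rewrite oddM !odd_lucas; lia. Qed.

Lemma odd_lucas_sq_sum k n :
  odd (lucas_sq_sum k n) = ((n + k) %% 3 == 1) (+) (n %% 3 == 1).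
Proof.
have /(congr1 odd) := lucas_sq_sum_telescope k n.
by rewrite oddD !odd_lucas_prod; lia.
Qed.

Lemma dvd2_lucas_sq_sum k n : 3 %| k -> 2 %| lucas_sq_sum k n.
Proof. by rewrite dvdn2 odd_lucas_sq_sum; lia. Qed.

Lemma exists_odd_lucas_sq_sum k : ~~ (3 %| k) -> exists n, odd (lucas_sq_sum k n).
Proof.
move=> k3; exists (k %% 3 == 2); rewrite odd_lucas_sq_sum.
by case: eqP => /= k2; lia.
Qed.

Lemma lucas_sq_sum_common_dvd_odd k d :
  odd k -> (forall n, d %| lucas_sq_sum k n) -> d %| 2.
Proof.
move=> odd_k dvd_d.
have rec : lucas_sq_sum k 2 + lucas_sq_sum k 0 + 10 = 3 * lucas_sq_sum k 1.
  by have := lucas_sq_sum_rec k 0; rewrite add0n odd_k; lia.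
have dvd_10 : d %| 10.
  have : d %| lucas_sq_sum k 2 + lucas_sq_sum k 0 + 10 by rewrite rec dvdn_mull.
  by rewrite -addnA (dvdn_addr _ (dvd_d 2)) (dvdn_addr _ (dvd_d 0)).
have sum0E : lucas_sq_sum k 0 + 4 = 5 * (fib k * fib k.+1).
  have := lucas_prod_fib k; have := lucas_sq_sum_telescope k 0.
  by rewrite (_ : lucas_prod 0 = 2) // add0n odd_k; lia.
have coprime_d5 : coprime d 5.
  rewrite coprime_sym prime_coprime //; apply/negP => dvd5_d.
  have /(dvdn_addr 4) := dvdn_trans dvd5_d (dvd_d 0).
  by rewrite sum0E dvdn_mulr.
by rewrite -(Gauss_dvdl 2 coprime_d5).
Qed.

Lemma lucas_sq_sum_gcd_odd k :
  odd k -> is_gcd_of_seq (lucas_sq_sum k) (if 3 %| k then 2 else 1).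
Proof.
move=> odd_k; have dvd_2 := @lucas_sq_sum_common_dvd_odd k _ odd_k.
case: ifPn => k3.
  by split=> [n|d /dvd_2]; first exact: dvd2_lucas_sq_sum.
split=> [n|d dvd_d]; first exact: dvd1n.
have [n odd_S] := exists_odd_lucas_sq_sum k k3.
have /eqP <- : coprime 2 (lucas_sq_sum k n) by rewrite coprime2n.
by rewrite dvdn_gcd (dvd_2 d dvd_d) dvd_d.
Qed.

Theorem theorem5p4 (k : nat) (hk : 1 <= k) :
  is_gcd_of_seq (lucas_sq_sum k)
    (if ~~ odd k then 5 * fib k
     else if k %% 6 == 3 then 2
     else 1).
Proof.
case: ifPn => [even_k | /negPn odd_k]; first exact: lucas_sq_sum_gcd_even.
have -> : (k %% 6 == 3) = (3 %| k) by lia.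
exact: lucas_sq_sum_gcd_odd.
Qed.
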